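(* For all types $A$ and $B$: (1) the types $\mathbb U$, $\flat A$ and $A\rightarrow B$ are pure; (2) if $A$ and $B$ are pure, then so are $A+B$ and $A\times B$; (3) $\sharp A$ and $A\Rightarrow B$ are not pure, unless they are empty (i.e. unless their semantics is empty).
   Context: Calculus: pure values $v::=x\mid\lambda x.\vec{s}\mid *\mid (v_1,v_2)\mid \mathtt{inl}(v)\mid\mathtt{inr}(v)$; term distributions are formal $\mathbb C$-combinations of pure terms modulo the weak-vector-space congruence (which does not identify $0\cdot t$ with $\vec0$); each has a unique canonical form $\sum_i\alpha_it_i$ with distinct $t_i$, whose domain is $\{t_i\}$. Pairs, $\mathtt{inl}$, $\mathtt{inr}$ extend (bi)linearly to value distributions. $\mathcal V$ = closed pure values, $\vec{\mathcal V}$ = closed value distributions, with $\langle\sum_i\alpha_iv_i|\sum_j\beta_jw_j\rangle=\sum_{i,j}\overline{\alpha_i}\beta_j\delta_{v_i,w_j}$, $\mathcal S$ the unit sphere, $\mathrm{Span}(X)$ finite linear combinations, $\flat X=\bigcup_{\vec v\in X}\mathrm{dom}(\vec v)$. Types $A,B::=\mathbb U\mid\flat A\mid\sharp A\mid A+B\mid A\times B\mid A\rightarrow B\mid A\Rightarrow B$ with $[\![\mathbb U]\!]=\{*\}$, $[\![\flat A]\!]=\flat[\![A]\!]$, $[\![\sharp A]\!]=\mathrm{Span}([\![A]\!])\cap\mathcal S$, $[\![A+B]\!]=\{\mathtt{inl}(\vec v):\vec v\in[\![A]\!]\}\cup\{\mathtt{inr}(\vec w):\vec w\in[\![B]\!]\}$,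 $[\![A\times B]\!]=\{(\vec v,\vec w):\vec v\in[\![A]\!],\vec w\in[\![B]\!]\}$, $[\![A\rightarrow B]\!]=\{\lambda x.\vec t\ \text{closed}:\forall\vec v\in[\![A]\!],\ \vec t\langle x:=\vec v\rangle\Vdash B\}$, $[\![A\Rightarrow B]\!]=\{(\sum_i\alpha_i\cdot\lambda x.\vec t_i)\in\mathcal S:\forall\vec v\in[\![A]\!],\ (\sum_i\alpha_i\cdot\vec t_i\langle x:=\vec v\rangle)\Vdash B\}$, where $\vec t\langle x:=\vec w\rangle=\sum_j\beta_j\vec t[x:=w_j]$ and $\vec t\Vdash B$ means $\vec t$ evaluates (call-by-value, linearly) to some element of $[\![B]\!]$. A type $A$ is pure when $[\![A]\!]\subseteq\mathcal V$. *)

From Stdlib Require Import Reals List Arith ClassicalEpsilon Relations.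
From Coquelicot Require Import Coquelicot.

(* Pure values  v ::= x | \x.s | * | (v,w) | inl v | inr v
   Pure terms   t ::= v | t s | t;s | let (x,y)=t in s | match t {inl x => s1 | inr y => s2}
   Term distributions: formal C-combinations  t | 0 | a.s | s1 + s2  (modulo congruence). *)
Inductive val : Type :=
| VVar : nat -> val
| VLam : dist -> val              (* binds index 0 in the body *)
| VUnit : val
| VPair : val -> val -> val
| VInl : val -> val
| VInr : val -> val
with term : Type :=
| TVal : val -> term
| TApp : term -> term -> term
| TSeq : term -> dist -> term
| TLet : term -> dist -> term     (* let (x,y) = t in s : x is index 1, y is index 0 *)
| TMatch : term -> dist -> dist -> term  (* each branch binds index 0 *)
with dist : Type :=
| DT : term -> dist
| DZero : dist
| DScal : C -> dist -> dist
| DAdd : dist -> dist -> dist.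

Fixpoint lift_v (c : nat) (v : val) : val :=
  match v with
  | VVar n => if Nat.leb c n then VVar (S n) else VVar n
  | VLam d => VLam (lift_d (S c) d)
  | VUnit => VUnit
  | VPair v1 v2 => VPair (lift_v c v1) (lift_v c v2)
  | VInl v1 => VInl (lift_v c v1)
  | VInr v1 => VInr (lift_v c v1)
  end
with lift_t (c : nat) (t : term) : term :=
  match t with
  | TVal v => TVal (lift_v c v)
  | TApp t1 t2 => TApp (lift_t c t1) (lift_t c t2)
  | TSeq t1 d => TSeq (lift_t c t1) (lift_d c d)
  | TLet t1 d => TLet (lift_t c t1) (lift_d (S (S c)) d)
  | TMatch t1 d1 d2 => TMatch (lift_t c t1) (lift_d (S c) d1) (lift_d (S c) d2)
  end
with lift_d (c : nat) (d : dist) : dist :=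
  match d with
  | DT t => DT (lift_t c t)
  | DZero => DZero
  | DScal a d1 => DScal a (lift_d c d1)
  | DAdd d1 d2 => DAdd (lift_d c d1) (lift_d c d2)
  end.

Fixpoint subst_v (j : nat) (u : val) (v : val) : val :=
  match v with
  | VVar n => if Nat.eqb n j then u else if Nat.ltb j n then VVar (pred n) else VVar n
  | VLam d => VLam (subst_d (S j) (lift_v 0 u) d)
  | VUnit => VUnit
  | VPair v1 v2 => VPair (subst_v j u v1) (subst_v j u v2)
  | VInl v1 => VInl (subst_v j u v1)
  | VInr v1 => VInr (subst_v j u v1)
  end
with subst_t (j : nat) (u : val) (t : term) : term :=
  match t with
  | TVal v => TVal (subst_v j u v)
  | TApp t1 t2 => TApp (subst_t j u t1) (subst_t j u t2)
  | TSeq t1 d => TSeq (subst_t j u t1) (subst_d j u d)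
  | TLet t1 d => TLet (subst_t j u t1) (subst_d (S (S j)) (lift_v 0 (lift_v 0 u)) d)
  | TMatch t1 d1 d2 =>
      TMatch (subst_t j u t1) (subst_d (S j) (lift_v 0 u) d1) (subst_d (S j) (lift_v 0 u) d2)
  end
with subst_d (j : nat) (u : val) (d : dist) : dist :=
  match d with
  | DT t => DT (subst_t j u t)
  | DZero => DZero
  | DScal a d1 => DScal a (subst_d j u d1)
  | DAdd d1 d2 => DAdd (subst_d j u d1) (subst_d j u d2)
  end.

Fixpoint closed_v (n : nat) (v : val) : Prop :=
  match v with
  | VVar k => (k < n)%nat
  | VLam d => closed_d (S n) d
  | VUnit => True
  | VPair v1 v2 => closed_v n v1 /\ closed_v n v2
  | VInl v1 => closed_v n v1
  | VInr v1 => closed_v n v1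
  end
with closed_t (n : nat) (t : term) : Prop :=
  match t with
  | TVal v => closed_v n v
  | TApp t1 t2 => closed_t n t1 /\ closed_t n t2
  | TSeq t1 d => closed_t n t1 /\ closed_d n d
  | TLet t1 d => closed_t n t1 /\ closed_d (S (S n)) d
  | TMatch t1 d1 d2 => closed_t n t1 /\ closed_d (S n) d1 /\ closed_d (S n) d2
  end
with closed_d (n : nat) (d : dist) : Prop :=
  match d with
  | DT t => closed_t n t
  | DZero => True
  | DScal _ d1 => closed_d n d1
  | DAdd d1 d2 => closed_d n d1 /\ closed_d n d2
  end.

(* NB: there is no rule 0.t == 0. *)
Inductive veq : val -> val -> Prop :=
| veq_refl v : veq v v
| veq_sym v w : veq v w -> veq w v
| veq_trans u v w : veq u v -> veq v w -> veq u w
| veq_lam d d' : deq d d' -> veq (VLam d) (VLam d')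
| veq_pair v1 v2 w1 w2 : veq v1 w1 -> veq v2 w2 -> veq (VPair v1 v2) (VPair w1 w2)
| veq_inl v w : veq v w -> veq (VInl v) (VInl w)
| veq_inr v w : veq v w -> veq (VInr v) (VInr w)
with teq : term -> term -> Prop :=
| teq_refl t : teq t t
| teq_sym t s : teq t s -> teq s t
| teq_trans t s r : teq t s -> teq s r -> teq t r
| teq_val v w : veq v w -> teq (TVal v) (TVal w)
| teq_app t1 t2 s1 s2 : teq t1 s1 -> teq t2 s2 -> teq (TApp t1 t2) (TApp s1 s2)
| teq_seq t s d e : teq t s -> deq d e -> teq (TSeq t d) (TSeq s e)
| teq_let t s d e : teq t s -> deq d e -> teq (TLet t d) (TLet s e)
| teq_match t s d1 e1 d2 e2 : teq t s -> deq d1 e1 -> deq d2 e2 ->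
    teq (TMatch t d1 d2) (TMatch s e1 e2)
with deq : dist -> dist -> Prop :=
| deq_refl d : deq d d
| deq_sym d e : deq d e -> deq e d
| deq_trans d e f : deq d e -> deq e f -> deq d f
| deq_T t s : teq t s -> deq (DT t) (DT s)
| deq_scal_cong a d e : deq d e -> deq (DScal a d) (DScal a e)
| deq_add_cong d1 d2 e1 e2 : deq d1 e1 -> deq d2 e2 -> deq (DAdd d1 d2) (DAdd e1 e2)
| deq_comm d e : deq (DAdd d e) (DAdd e d)
| deq_assoc d e f : deq (DAdd (DAdd d e) f) (DAdd d (DAdd e f))
| deq_add_zero d : deq (DAdd d DZero) d
| deq_one d : deq (DScal (RtoC 1) d) d
| deq_scal_scal a b d : deq (DScal a (DScal b d)) (DScal (Cmult a b) d)
| deq_scal_distr a b d : deq (DScal (Cplus a b) d) (DAdd (DScal a d) (DScal b d))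
| deq_distr_scal a d e : deq (DScal a (DAdd d e)) (DAdd (DScal a d) (DScal a e))
| deq_scal_zero a : deq (DScal a DZero) DZero.

Fixpoint dmap (f : term -> term) (d : dist) : dist :=
  match d with
  | DT t => DT (f t)
  | DZero => DZero
  | DScal a d1 => DScal a (dmap f d1)
  | DAdd d1 d2 => DAdd (dmap f d1) (dmap f d2)
  end.

Fixpoint dbind (f : term -> dist) (d : dist) : dist :=
  match d with
  | DT t => f t
  | DZero => DZero
  | DScal a d1 => DScal a (dbind f d1)
  | DAdd d1 d2 => DAdd (dbind f d1) (dbind f d2)
  end.

Definition dinl (d : dist) : dist :=
  dmap (fun t => match t with TVal v => TVal (VInl v) | _ => t end) d.
Definition dinr (d : dist) : dist :=
  dmap (fun t => match t with TVal v => TVal (VInr v) | _ => t end) d.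
Definition dpair (d1 d2 : dist) : dist :=
  dbind (fun t1 => match t1 with
                   | TVal v => dmap (fun t2 => match t2 with
                                               | TVal w => TVal (VPair v w)
                                               | _ => t2 end) d2
                   | _ => DZero end) d1.

(* body<x := sum_j b_j w_j>  =  sum_j b_j body[x := w_j] *)
Definition dsubst (body : dist) (vd : dist) : dist :=
  dbind (fun t => match t with TVal w => subst_d 0 w body | _ => DZero end) vd.

Definition dsum_t (l : list (C * term)) : dist :=
  fold_right (fun p acc => DAdd (DScal (fst p) (DT (snd p))) acc) DZero l.
Definition dsum_d (l : list (C * dist)) : dist :=
  fold_right (fun p acc => DAdd (DScal (fst p) (snd p)) acc) DZero l.

Fixpoint canon (l : list (C * term)) : Prop :=
  match l with
  | nil => True
  | p :: l' => (forall q, In q l' -> ~ teq (snd p) (snd q)) /\ canon l'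
  end.

Definition dom (d : dist) (t : term) : Prop :=
  exists l, canon l /\ deq d (dsum_t l) /\ exists p, In p l /\ teq t (snd p).

Definition delta (t s : term) : C :=
  if excluded_middle_informative (teq t s) then RtoC 1 else RtoC 0.
Definition ip (l1 l2 : list (C * term)) : C :=
  fold_right Cplus (RtoC 0)
    (map (fun p => fold_right Cplus (RtoC 0)
                     (map (fun q => Cmult (Cmult (Cconj (fst p)) (fst q)) (delta (snd p) (snd q))) l2))
         l1).

Definition in_sphere (d : dist) : Prop :=
  exists l, deq d (dsum_t l) /\ ip l l = RtoC 1.

Definition in_span (X : dist -> Prop) (d : dist) : Prop :=
  exists l : list (C * dist), (forall p, In p l -> X (snd p)) /\ deq d (dsum_d l).

Inductive tstep : term -> dist -> Prop :=
| st_beta b v : tstep (TApp (TVal (VLam b)) (TVal v)) (subst_d 0 v b)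
| st_seq s : tstep (TSeq (TVal VUnit) s) s
| st_let v w s : tstep (TLet (TVal (VPair v w)) s) (subst_d 0 v (subst_d 0 (lift_v 0 w) s))
| st_inl v s1 s2 : tstep (TMatch (TVal (VInl v)) s1 s2) (subst_d 0 v s1)
| st_inr v s1 s2 : tstep (TMatch (TVal (VInr v)) s1 s2) (subst_d 0 v s2)
| st_app_r s t t' : tstep t t' -> tstep (TApp s t) (dmap (TApp s) t')
| st_app_l s s' v : tstep s s' -> tstep (TApp s (TVal v)) (dmap (fun s0 => TApp s0 (TVal v)) s')
| st_seq_ctx t t' s : tstep t t' -> tstep (TSeq t s) (dmap (fun t0 => TSeq t0 s) t')
| st_let_ctx t t' s : tstep t t' -> tstep (TLet t s) (dmap (fun t0 => TLet t0 s) t')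
| st_match_ctx t t' s1 s2 : tstep t t' ->
    tstep (TMatch t s1 s2) (dmap (fun t0 => TMatch t0 s1 s2) t').

Definition dstep (d d' : dist) : Prop :=
  exists a t r t', tstep t t' /\ deq d (DAdd (DScal a (DT t)) r) /\ ~ dom r t /\
                   d' = DAdd (DScal a t') r.

Definition reds : dist -> dist -> Prop :=
  clos_refl_trans dist (fun d e => dstep d e \/ deq d e).

Inductive ty : Type :=
| TyU : ty
| TyFlat : ty -> ty
| TySharp : ty -> ty
| TySum : ty -> ty -> ty
| TyProd : ty -> ty -> ty
| TyArr : ty -> ty -> ty      (* A -> B *)
| TyArrL : ty -> ty -> ty.    (* A => B *)

Fixpoint sem (A : ty) : dist -> Prop :=
  match A with
  | TyU => fun d => deq d (DT (TVal VUnit))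
  | TyFlat A1 => fun d => exists d', sem A1 d' /\ exists t, dom d' t /\ deq d (DT t)
  | TySharp A1 => fun d => in_span (sem A1) d /\ in_sphere d
  | TySum A1 A2 => fun d =>
      (exists d', sem A1 d' /\ deq d (dinl d')) \/ (exists d', sem A2 d' /\ deq d (dinr d'))
  | TyProd A1 A2 => fun d =>
      exists d1 d2, sem A1 d1 /\ sem A2 d2 /\ deq d (dpair d1 d2)
  | TyArr A1 A2 => fun d =>
      exists b, closed_v 0 (VLam b) /\ deq d (DT (TVal (VLam b))) /\
        forall vd, sem A1 vd -> exists w, reds (dsubst b vd) w /\ sem A2 w
  | TyArrL A1 A2 => fun d =>
      exists l : list (C * dist),
        (forall p, In p l -> closed_v 0 (VLam (snd p))) /\
        deq d (dsum_d (map (fun p => (fst p, DT (TVal (VLam (snd p))))) l)) /\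
        in_sphere d /\
        forall vd, sem A1 vd ->
          exists w, reds (dsum_d (map (fun p => (fst p, dsubst (snd p) vd)) l)) w /\ sem A2 w
  end.

Definition pure (A : ty) : Prop :=
  forall d, sem A d -> exists v, closed_v 0 v /\ deq d (DT (TVal v)).

(* Every term in the support of an element of a type semantics is congruent to
   a closed value.  For U, flat A and A -> B the element is a single term, hence
   a value; sums and products of pure types follow by (bi)linearity of inl, inr
   and pairing.  Conversely, the coefficient [coef s d] of a term in a
   distribution is invariant under the congruence, and is 0 or 1 when [d] is a
   single term.  The semantics of sharp A is closed under d |-> -d, producing
   the coefficient -1.  If lam x.t lies in the semantics of A => B, so does
   ((1+i)/2) lam x.t + ((-1+i)/2) lam x.(-t): it has norm 1 and computes like
   lam x.t, but has a coefficient with nonzero imaginary part. *)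
From Pilot Require Import Defs.
From Stdlib Require Import Reals Lra List Relations ClassicalEpsilon.
From Coquelicot Require Import Coquelicot.

Lemma teq_val_inv t s : teq t s ->
  (forall u, t = TVal u -> exists w, s = TVal w /\ veq u w) /\
  (forall w, s = TVal w -> exists u, t = TVal u /\ veq u w).
Proof.
  induction 1 as [t|t s _ [IH1 IH2]|t s r _ [IH1 IH2] _ [IH3 IH4]| | | | |];
    split; intros x E; subst; try discriminate.
  - eauto using veq_refl.
  - eauto using veq_refl.
  - destruct (IH2 x eq_refl) as [y [-> ?]]; eauto using veq_sym.
  - destruct (IH1 x eq_refl) as [y [-> ?]]; eauto using veq_sym.
  - destruct (IH1 x eq_refl) as [y [-> ?]]; destruct (IH3 y eq_refl) as [z [-> ?]];
      eauto using veq_trans.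
  - destruct (IH4 x eq_refl) as [y [-> ?]]; destruct (IH2 y eq_refl) as [z [-> ?]];
      eauto using veq_trans.
  - injection E as ->; eauto.
  - injection E as ->; eauto.
Qed.

Lemma teq_TVal_l u t : teq (TVal u) t -> exists w, t = TVal w /\ veq u w.
Proof. intros H; exact (proj1 (teq_val_inv _ _ H) u eq_refl). Qed.

Lemma teq_TVal_r u t : teq t (TVal u) -> exists w, t = TVal w /\ veq w u.
Proof. intros H; exact (proj2 (teq_val_inv _ _ H) u eq_refl). Qed.

Lemma teq_val_cases t s : teq t s ->
  (exists u w, t = TVal u /\ s = TVal w /\ veq u w) \/
  ((forall u, t <> TVal u) /\ (forall w, s <> TVal w)).
Proof.
  intros H; destruct t as [u| | | |];
    [left; destruct (teq_TVal_l _ _ H) as [w [-> ?]]; eauto|..].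
  all: right; split; [discriminate|intros w ->].
  all: destruct (teq_TVal_r _ _ H) as [? [? _]]; discriminate.
Qed.

Lemma veq_lam_inv v w : veq v w ->
  (forall d, v = VLam d -> exists e, w = VLam e /\ deq d e) /\
  (forall e, w = VLam e -> exists d, v = VLam d /\ deq d e).
Proof.
  induction 1 as [v|v w _ [IH1 IH2]|u v w _ [IH1 IH2] _ [IH3 IH4]| | | |];
    split; intros x E; subst; try discriminate.
  - eauto using deq_refl.
  - eauto using deq_refl.
  - destruct (IH2 x eq_refl) as [y [-> ?]]; eauto using deq_sym.
  - destruct (IH1 x eq_refl) as [y [-> ?]]; eauto using deq_sym.
  - destruct (IH1 x eq_refl) as [y [-> ?]]; destruct (IH3 y eq_refl) as [z [-> ?]];
      eauto using deq_trans.
  - destruct (IH4 x eq_refl) as [y [-> ?]]; destruct (IH2 y eq_refl) as [z [-> ?]];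
      eauto using deq_trans.
  - injection E as ->; eauto.
  - injection E as ->; eauto.
Qed.

Lemma teq_lam_inv b v : teq (TVal (VLam b)) (TVal v) -> exists b', v = VLam b' /\ deq b b'.
Proof.
  intros H; destruct (teq_TVal_l _ _ H) as [w [E Hw]]; injection E as <-.
  exact (proj1 (veq_lam_inv _ _ Hw) b eq_refl).
Qed.

(* [dinl], [dinr] and the inner map of [dpair] are [dmap (on_val _)] up to
   conversion. *)
Definition on_val (f : val -> val) (t : term) : term :=
  match t with TVal v => TVal (f v) | _ => t end.

Lemma teq_on_val f : (forall v w, veq v w -> veq (f v) (f w)) ->
  forall t s, teq t s -> teq (on_val f t) (on_val f s).
Proof.
  intros Hf t s H.
  destruct (teq_val_cases _ _ H) as [[u [w [-> [-> ?]]]]|[Ht Hs]].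
  - apply teq_val, Hf; assumption.
  - destruct t; [now destruct (Ht v)|..]; (destruct s; [now destruct (Hs v)|..]); exact H.
Qed.

Lemma dmap_deq f : (forall t s, teq t s -> teq (f t) (f s)) ->
  forall d e, deq d e -> deq (dmap f d) (dmap f e).
Proof. intros Hf d e H; induction H; simpl; eauto using deq. Qed.

Lemma dbind_deq f : (forall t s, teq t s -> deq (f t) (f s)) ->
  forall d e, deq d e -> deq (dbind f d) (dbind f e).
Proof. intros Hf d e H; induction H; simpl; eauto using deq. Qed.

Lemma dmap_ext_teq f g : (forall t, teq (f t) (g t)) -> forall d, deq (dmap f d) (dmap g d).
Proof. intros Hfg d; induction d; simpl; eauto using deq. Qed.

Fixpoint supp (d : Defs.dist) (t : term) : Prop :=
  match d with
  | DT s => s = t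
  | DZero => False
  | DScal _ d1 => supp d1 t
  | DAdd d1 d2 => supp d1 t \/ supp d2 t
  end.

Lemma supp_deq d e : deq d e ->
  (forall t, supp d t -> exists s, supp e s /\ teq t s) /\
  (forall t, supp e t -> exists s, supp d s /\ teq t s).
Proof.
  induction 1; simpl in *; try solve [firstorder eauto using teq_refl, teq_sym, teq_trans].
  split; intros ? <-; eauto using teq_sym.
Qed.

Lemma supp_dmap f d t : supp (dmap f d) t -> exists t0, supp d t0 /\ t = f t0.
Proof. induction d; simpl; firstorder eauto. Qed.

Lemma supp_dbind f d t : supp (dbind f d) t -> exists t0, supp d t0 /\ supp (f t0) t.
Proof. induction d; simpl; firstorder eauto. Qed.

Lemma supp_dsum_d l t : supp (dsum_d l) t <-> exists p, In p l /\ supp (snd p) t.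
Proof.
  induction l as [|p l IH]; simpl; [firstorder|].
  rewrite IH; firstorder (subst; eauto).
Qed.

Lemma supp_dsum_t l p : In p l -> supp (dsum_t l) (snd p).
Proof. induction l; simpl; intuition (subst; simpl; auto). Qed.

Definition val_supp (d : Defs.dist) : Prop :=
  forall t, supp d t -> exists v, closed_v 0 v /\ teq t (TVal v).

Lemma val_supp_deq d e : deq d e -> val_supp e -> val_supp d.
Proof.
  intros H He t Ht.
  destruct (proj1 (supp_deq _ _ H) t Ht) as [s [Hs Hts]].
  destruct (He s Hs) as [v [? ?]]; eauto using teq_trans.
Qed.

Lemma val_supp_DT v : closed_v 0 v -> val_supp (DT (TVal v)).
Proof. intros Hv t <-; eauto using teq_refl. Qed.

Lemma val_supp_dsum_d l : (forall p, In p l -> val_supp (snd p)) -> val_supp (dsum_d l).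
Proof. intros H t Ht; apply supp_dsum_d in Ht as [p [? ?]]; eapply H; eauto. Qed.

Lemma val_supp_dom d t : val_supp d -> dom d t -> exists v, closed_v 0 v /\ teq t (TVal v).
Proof.
  intros Hd [l [_ [Hl [p [Hp Ht]]]]].
  destruct (proj2 (supp_deq _ _ Hl) _ (supp_dsum_t l p Hp)) as [s [Hs Hps]].
  destruct (Hd s Hs) as [v [? ?]]; eauto using teq_trans.
Qed.

Lemma val_supp_dmap_on_val f d :
  (forall v w, veq v w -> veq (f v) (f w)) -> (forall v, closed_v 0 v -> closed_v 0 (f v)) ->
  val_supp d -> val_supp (dmap (on_val f) d).
Proof.
  intros Hf Hc Hd t Ht; apply supp_dmap in Ht as [t0 [Ht0 ->]].
  destruct (Hd t0 Ht0) as [v [Hv Hq]].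
  exists (f v); split; auto. exact (teq_on_val f Hf _ _ Hq).
Qed.

Lemma val_supp_dpair d1 d2 : val_supp d1 -> val_supp d2 -> val_supp (dpair d1 d2).
Proof.
  intros H1 H2 t Ht; apply supp_dbind in Ht as [t1 [Ht1 Ht]].
  destruct (H1 t1 Ht1) as [v1 [Hv1 Hq1]].
  destruct (teq_TVal_r _ _ Hq1) as [u1 [-> Hu1]].
  apply supp_dmap in Ht as [t2 [Ht2 ->]].
  destruct (H2 t2 Ht2) as [v2 [Hv2 Hq2]].
  exists (VPair v1 v2); simpl; split; auto.
  eapply teq_trans; [apply (teq_on_val (VPair u1)); eauto using veq_pair, veq_refl|].
  simpl; auto using teq_val, veq_pair, veq_refl.
Qed.

Lemma sem_val_supp A d : sem A d -> val_supp d.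
Proof.
  revert d; induction A as [|A IH|A IH|A IHA B IHB|A IHA B IHB|A _ B _|A _ B _];
    simpl; intros d Hd.
  - eapply val_supp_deq; [exact Hd|]; apply val_supp_DT; exact I.
  - destruct Hd as [d' [Hd' [t [Hdom Hd]]]].
    destruct (val_supp_dom d' t (IH d' Hd') Hdom) as [v [Hv Ht]].
    eapply val_supp_deq; [exact Hd|]. intros s <-; eauto.
  - destruct Hd as [[l [Hl Hd]] _].
    eapply val_supp_deq; [exact Hd|]. apply val_supp_dsum_d; auto.
  - destruct Hd as [[d' [Hd' Hd]]|[d' [Hd' Hd]]];
      (eapply val_supp_deq; [exact Hd|]); apply val_supp_dmap_on_val;
      simpl; auto using veq_inl, veq_inr.
  - destruct Hd as [d1 [d2 [H1 [H2 Hd]]]].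
    eapply val_supp_deq; [exact Hd|]. apply val_supp_dpair; auto.
  - destruct Hd as [b [Hb [Hd _]]].
    eapply val_supp_deq; [exact Hd|]. apply val_supp_DT; exact Hb.
  - destruct Hd as [l [Hl [Hd _]]].
    eapply val_supp_deq; [exact Hd|]. apply val_supp_dsum_d.
    intros p Hp; apply in_map_iff in Hp as [q [<- Hq]]. apply val_supp_DT, Hl, Hq.
Qed.

Lemma pure_U : pure TyU.
Proof. intros d Hd; exists VUnit; simpl; auto. Qed.

Lemma pure_Flat A : pure (TyFlat A).
Proof.
  intros d [d' [Hd' [t [Hdom Hd]]]].
  destruct (val_supp_dom d' t (sem_val_supp A d' Hd') Hdom) as [v [Hv Ht]].
  exists v; split; auto. eapply deq_trans; [exact Hd|]. apply deq_T, Ht.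
Qed.

Lemma pure_Arr A B : pure (TyArr A B).
Proof. intros d [b [Hb [Hd _]]]; eauto. Qed.

Lemma dmap_on_val_DT f d v : (forall v w, veq v w -> veq (f v) (f w)) ->
  deq d (DT (TVal v)) -> deq (dmap (on_val f) d) (DT (TVal (f v))).
Proof. intros Hf Hd; exact (dmap_deq _ (teq_on_val f Hf) _ _ Hd). Qed.

Lemma pure_Sum A B : pure A -> pure B -> pure (TySum A B).
Proof.
  intros HA HB d [[d' [Hd' Hd]]|[d' [Hd' Hd]]].
  - destruct (HA d' Hd') as [v [Hv Hq]]. exists (VInl v); split; [exact Hv|].
    eapply deq_trans; [exact Hd|]. apply (dmap_on_val_DT VInl); auto using veq_inl.
  - destruct (HB d' Hd') as [v [Hv Hq]]. exists (VInr v); split; [exact Hv|].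
    eapply deq_trans; [exact Hd|]. apply (dmap_on_val_DT VInr); auto using veq_inr.
Qed.

Lemma dpair_deq_l d1 e1 d2 : deq d1 e1 -> deq (dpair d1 d2) (dpair e1 d2).
Proof.
  apply dbind_deq; intros t s H.
  destruct (teq_val_cases _ _ H) as [[u [w [-> [-> Huw]]]]|[Ht Hs]].
  - apply dmap_ext_teq; intros [v| | | |]; simpl; auto using teq_refl, teq_val, veq_pair, veq_refl.
  - destruct t; [now destruct (Ht v)|..]; (destruct s; [now destruct (Hs v)|..]); apply deq_refl.
Qed.

Lemma pure_Prod A B : pure A -> pure B -> pure (TyProd A B).
Proof.
  intros HA HB d [d1 [d2 [H1 [H2 Hd]]]].
  destruct (HA d1 H1) as [v1 [Hv1 Hq1]], (HB d2 H2) as [v2 [Hv2 Hq2]].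
  exists (VPair v1 v2); split; [split; assumption|].
  eapply deq_trans; [exact Hd|]. eapply deq_trans; [apply dpair_deq_l, Hq1|].
  apply (dmap_on_val_DT (VPair v1)); auto using veq_pair, veq_refl.
Qed.

Lemma delta_teq_l t t' s : teq t t' -> delta t s = delta t' s.
Proof.
  intros H; unfold delta.
  destruct (excluded_middle_informative (teq t s)), (excluded_middle_informative (teq t' s));
    auto; exfalso; eauto using teq_trans, teq_sym.
Qed.

Lemma delta_sym t s : delta t s = delta s t.
Proof.
  unfold delta.
  destruct (excluded_middle_informative (teq t s)), (excluded_middle_informative (teq s t));
    auto; exfalso; eauto using teq_sym.
Qed.

Lemma delta_refl t : delta t t = RtoC 1.
Proof.
  unfold delta; destruct (excluded_middle_informative (teq t t)) as [|H]; auto.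
  exfalso; apply H, teq_refl.
Qed.

Lemma delta_01 t s : delta t s = RtoC 1 \/ delta t s = RtoC 0.
Proof. unfold delta; destruct (excluded_middle_informative (teq t s)); auto. Qed.

Fixpoint coef (s : term) (d : Defs.dist) : C :=
  match d with
  | DT t => delta t s
  | DZero => RtoC 0
  | DScal a d1 => Cmult a (coef s d1)
  | DAdd d1 d2 => Cplus (coef s d1) (coef s d2)
  end.

Lemma coef_deq d e : deq d e -> forall s, coef s d = coef s e.
Proof.
  induction 1; intros x; simpl; try ring.
  - symmetry; auto.
  - congruence.
  - apply delta_teq_l; assumption.
  - rewrite IHdeq; reflexivity.
  - rewrite IHdeq1, IHdeq2; reflexivity.
Qed.

Lemma coef_single d t s : deq d (DT t) -> coef s d = RtoC 1 \/ coef s d = RtoC 0.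
Proof. intros H; rewrite (coef_deq _ _ H); apply delta_01. Qed.

Lemma in_span_scal X c d : in_span X d -> in_span X (DScal c d).
Proof.
  intros [l [Hl Hd]].
  exists (map (fun p => (Cmult c (fst p), snd p)) l); split.
  - intros p Hp; apply in_map_iff in Hp as [q [<- Hq]]; exact (Hl q Hq).
  - eapply deq_trans; [apply deq_scal_cong, Hd|]. clear Hl Hd.
    induction l as [|p l IH]; simpl; [apply deq_scal_zero|].
    eapply deq_trans; [apply deq_distr_scal|]. apply deq_add_cong; [apply deq_scal_scal|exact IH].
Qed.

Lemma in_sphere_deq d e : deq d e -> in_sphere e -> in_sphere d.
Proof. intros H [l [Hl Hn]]; exists l; eauto using deq_trans. Qed.

Lemma in_sphere_opp_DT t : in_sphere (DScal (RtoC (-1)) (DT t)).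
Proof.
  exists ((RtoC (-1), t) :: nil); split.
  - apply deq_sym, deq_add_zero.
  - unfold ip; simpl; rewrite delta_refl. apply injective_projections; simpl; lra.
Qed.

Lemma npure_Sharp A : (exists d, sem (TySharp A) d) -> ~ pure (TySharp A).
Proof.
  intros [d Hd] Hpure.
  destruct (Hpure d Hd) as [v [_ Hv]].
  assert (Hopp : sem (TySharp A) (DScal (RtoC (-1)) d)).
  { split; [apply in_span_scal, Hd|].
    eapply in_sphere_deq; [apply deq_scal_cong, Hv|apply in_sphere_opp_DT]. }
  destruct (Hpure _ Hopp) as [w [_ Hw]].
  pose proof (coef_single _ _ (TVal v) Hw) as Hcoef.
  simpl in Hcoef; rewrite (coef_deq _ _ Hv) in Hcoef; simpl in Hcoef.
  rewrite delta_refl in Hcoef.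
  destruct Hcoef as [E|E]; apply (f_equal fst) in E; simpl in E; lra.
Qed.

Definition comb (f : Defs.dist -> Defs.dist) (l : list (C * Defs.dist)) : Defs.dist :=
  dsum_d (map (fun p => (fst p, f (snd p))) l).

Definition scale (c : C) (l : list (C * Defs.dist)) : list (C * Defs.dist) :=
  map (fun p => (Cmult c (fst p), snd p)) l.

Definition sumC (l : list (C * Defs.dist)) : C :=
  fold_right (fun p acc => Cplus (fst p) acc) (RtoC 0) l.

Lemma comb_app f l1 l2 : deq (comb f (l1 ++ l2)) (DAdd (comb f l1) (comb f l2)).
Proof.
  unfold comb; rewrite map_app; induction l1 as [|p l1 IH]; simpl.
  - eapply deq_trans; [apply deq_sym, deq_add_zero|apply deq_comm].
  - eapply deq_trans; [apply deq_add_cong; [apply deq_refl|exact IH]|apply deq_sym, deq_assoc].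
Qed.

Lemma comb_scale f c l : deq (comb f (scale c l)) (DScal c (comb f l)).
Proof.
  induction l as [|p l IH]; simpl; [apply deq_sym, deq_scal_zero|].
  eapply deq_trans; [|apply deq_sym, deq_distr_scal].
  apply deq_add_cong; [apply deq_sym, deq_scal_scal|exact IH].
Qed.

Lemma comb_map_snd f h l :
  comb f (map (fun p => (fst p, h (snd p))) l) = comb (fun b => f (h b)) l.
Proof. unfold comb; rewrite map_map; reflexivity. Qed.

Lemma comb_ext f g l : (forall p, In p l -> deq (f (snd p)) (g (snd p))) ->
  deq (comb f l) (comb g l).
Proof.
  induction l as [|p l IH]; simpl; intros H; [apply deq_refl|].
  apply deq_add_cong; [apply deq_scal_cong, H; left; reflexivity|].
  apply IH; intros; apply H; right; assumption.
Qed.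

Lemma comb_scal_r f c l : deq (comb (fun b => DScal c (f b)) l) (DScal c (comb f l)).
Proof.
  induction l as [|p l IH]; simpl; [apply deq_sym, deq_scal_zero|].
  eapply deq_trans; [|apply deq_sym, deq_distr_scal].
  apply deq_add_cong; [|exact IH].
  eapply deq_trans; [apply deq_scal_scal|].
  eapply deq_trans; [|apply deq_sym, deq_scal_scal].
  rewrite Cmult_comm; apply deq_refl.
Qed.

(* Non-emptiness matters: [0 . X] is not congruent to the empty sum. *)
Lemma comb_const f l X : l <> nil -> (forall p, In p l -> deq (f (snd p)) X) ->
  deq (comb f l) (DScal (sumC l) X).
Proof.
  induction l as [|p [|q l] IH]; intros Hne H; [congruence| |].
  - simpl. eapply deq_trans; [apply deq_add_zero|].
    rewrite Cplus_comm, Cplus_0_l. apply deq_scal_cong, H; left; reflexivity.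
  - change (deq (DAdd (DScal (fst p) (f (snd p))) (comb f (q :: l)))
                (DScal (Cplus (fst p) (sumC (q :: l))) X)).
    eapply deq_trans; [|apply deq_sym, deq_scal_distr].
    apply deq_add_cong; [apply deq_scal_cong, H; left; reflexivity|].
    apply IH; [discriminate|intros; apply H; right; assumption].
Qed.

Lemma dbind_scal g f c : (forall t, deq (g t) (DScal c (f t))) ->
  forall d, deq (dbind g d) (DScal c (dbind f d)).
Proof.
  intros H d; induction d as [t| |a d IH|d1 IH1 d2 IH2]; simpl; auto.
  - apply deq_sym, deq_scal_zero.
  - eapply deq_trans; [apply deq_scal_cong, IH|].
    eapply deq_trans; [apply deq_scal_scal|].
    eapply deq_trans; [|apply deq_sym, deq_scal_scal].
    rewrite Cmult_comm; apply deq_refl.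
  - eapply deq_trans; [|apply deq_sym, deq_distr_scal]. apply deq_add_cong; auto.
Qed.

Lemma dsubst_scal c b vd : deq (dsubst (DScal c b) vd) (DScal c (dsubst b vd)).
Proof.
  apply dbind_scal; intros [w| | | |]; simpl; try apply deq_refl.
  all: apply deq_sym, deq_scal_zero.
Qed.

Definition lam (b : Defs.dist) : Defs.dist := DT (TVal (VLam b)).

Lemma lam_comb_val_inv l v : deq (comb lam l) (DT (TVal v)) ->
  exists b, v = VLam b /\ l <> nil /\ (forall p, In p l -> deq (snd p) b) /\ sumC l = RtoC 1.
Proof.
  intros H.
  assert (Hmem : forall p, In p l -> teq (TVal (VLam (snd p))) (TVal v)).
  { intros p Hp.
    assert (Hs : supp (comb lam l) (TVal (VLam (snd p)))).
    { apply supp_dsum_d; exists (fst p, lam (snd p)); split; [|reflexivity].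
      apply in_map_iff; eauto. }
    destruct (proj1 (supp_deq _ _ H) _ Hs) as [s [<- Hs']]; exact Hs'. }
  destruct l as [|p0 l0].
  - pose proof (coef_deq _ _ H (TVal v)) as E; simpl in E; rewrite delta_refl in E.
    apply (f_equal fst) in E; simpl in E; lra.
  - destruct (teq_lam_inv _ _ (Hmem p0 (or_introl eq_refl))) as [b [-> _]].
    assert (Hb : forall p, In p (p0 :: l0) -> deq (snd p) b).
    { intros p Hp; destruct (teq_lam_inv _ _ (Hmem p Hp)) as [b' [E Hb']].
      injection E as <-; exact Hb'. }
    exists b; repeat split; [discriminate|exact Hb|].
    assert (Hconst : deq (comb lam (p0 :: l0)) (DScal (sumC (p0 :: l0)) (lam b))).
    { apply comb_const; [discriminate|]. intros p Hp; apply deq_T, teq_val, veq_lam, Hb, Hp. }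
    pose proof (coef_deq _ _ (deq_trans _ _ _ (deq_sym _ _ Hconst) H) (TVal (VLam b))) as E.
    unfold lam in E; simpl in E; rewrite delta_refl in E. rewrite <- E; simpl; ring.
Qed.

(* [alpha - beta = 1], and [|alpha|^2 + |beta|^2 = |alpha + beta|^2 = 1]. *)
Definition alpha : C := (/2, /2)%R.
Definition beta : C := (-/2, /2)%R.

Lemma in_sphere_alpha_beta t1 t2 :
  in_sphere (DAdd (DScal alpha (DT t1)) (DScal beta (DT t2))).
Proof.
  exists ((alpha, t1) :: (beta, t2) :: nil); split.
  - simpl; apply deq_add_cong; [apply deq_refl|apply deq_sym, deq_add_zero].
  - unfold ip; simpl; rewrite !delta_refl, (delta_sym t2 t1).
    destruct (delta_01 t1 t2) as [E|E]; rewrite E; unfold alpha, beta;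
      apply injective_projections; simpl; lra.
Qed.

Definition phase_split (l : list (C * Defs.dist)) : list (C * Defs.dist) :=
  scale alpha l ++ scale beta (map (fun p => (fst p, DScal (RtoC (-1)) (snd p))) l).

Lemma comb_phase_split f l : deq (comb f (phase_split l))
  (DAdd (DScal alpha (comb f l)) (DScal beta (comb (fun b => f (DScal (RtoC (-1)) b)) l))).
Proof.
  eapply deq_trans; [apply comb_app|].
  apply deq_add_cong; [apply comb_scale|].
  rewrite <- (comb_map_snd f (DScal (RtoC (-1)))); apply comb_scale.
Qed.

Lemma body_comb_phase_split l vd :
  deq (comb (fun b => dsubst b vd) (phase_split l)) (comb (fun b => dsubst b vd) l).
Proof.
  eapply deq_trans; [apply comb_phase_split|].
  eapply deq_trans.
  { apply deq_add_cong; [apply deq_refl|apply deq_scal_cong].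
    eapply deq_trans; [|apply comb_scal_r].
    apply comb_ext with (g := fun b => DScal (RtoC (-1)) (dsubst b vd)).
    intros p _; apply dsubst_scal. }
  eapply deq_trans; [apply deq_add_cong; [apply deq_refl|apply deq_scal_scal]|].
  eapply deq_trans; [apply deq_sym, deq_scal_distr|].
  replace (Cplus alpha (Cmult beta (RtoC (-1)))) with (RtoC 1); [apply deq_one|].
  unfold alpha, beta; apply injective_projections; simpl; lra.
Qed.

Lemma closed_lam_phase_split l : (forall p, In p l -> closed_v 0 (VLam (snd p))) ->
  forall p, In p (phase_split l) -> closed_v 0 (VLam (snd p)).
Proof.
  intros Hl p Hp; apply in_app_or in Hp as [Hp|Hp];
    repeat (apply in_map_iff in Hp as [? [<- Hp]]); exact (Hl _ Hp).
Qed.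

Lemma npure_ArrL A B : (exists d, sem (TyArrL A B) d) -> ~ pure (TyArrL A B).
Proof.
  intros [d Hd] Hpure.
  destruct (Hpure d Hd) as [v [_ Hv]].
  destruct Hd as [l [Hcl [Hdl [_ Hred]]]].
  change (deq d (comb lam l)) in Hdl.
  destruct (lam_comb_val_inv l v (deq_trans _ _ _ (deq_sym _ _ Hdl) Hv))
    as [b [-> [Hne [Hb HS]]]].
  set (nb := DScal (RtoC (-1)) b).
  assert (Hsplit : deq (comb lam (phase_split l))
                     (DAdd (DScal alpha (lam b)) (DScal beta (lam nb)))).
  { eapply deq_trans; [apply comb_phase_split|].
    apply deq_add_cong; apply deq_scal_cong; [eauto using deq_trans, deq_sym|].
    eapply deq_trans; [apply comb_const with (X := lam nb); [exact Hne|]|].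
    - intros p Hp; apply deq_T, teq_val, veq_lam, deq_scal_cong, Hb, Hp.
    - rewrite HS; apply deq_one. }
  assert (Hsem : sem (TyArrL A B) (comb lam (phase_split l))).
  { exists (phase_split l); split; [apply closed_lam_phase_split, Hcl|].
    split; [apply deq_refl|split].
    - eapply in_sphere_deq; [exact Hsplit|apply in_sphere_alpha_beta].
    - intros vd Hvd; destruct (Hred vd Hvd) as [w [Hr Hw]]; exists w; split; [|exact Hw].
      eapply rt_trans; [apply rt_step; right; apply body_comb_phase_split|exact Hr]. }
  destruct (Hpure _ Hsem) as [w [_ Hw]].
  pose proof (coef_single _ _ (TVal (VLam b)) Hw) as Hcoef.
  rewrite (coef_deq _ _ Hsplit) in Hcoef; simpl in Hcoef; rewrite delta_refl in Hcoef.
  destruct (delta_01 (TVal (VLam nb)) (TVal (VLam b))) as [E|E]; rewrite E in Hcoef;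
    destruct Hcoef as [E'|E']; apply (f_equal snd) in E'; unfold alpha, beta in E';
    simpl in E'; lra.
Qed.

Theorem lemma5 : forall A B : ty,
  pure TyU /\ pure (TyFlat A) /\ pure (TyArr A B) /\
  (pure A -> pure B -> pure (TySum A B) /\ pure (TyProd A B)) /\
  ((exists d, sem (TySharp A) d) -> ~ pure (TySharp A)) /\
  ((exists d, sem (TyArrL A B) d) -> ~ pure (TyArrL A B)).
Proof.
  intros A B.
  split; [apply pure_U|]. split; [apply pure_Flat|]. split; [apply pure_Arr|].
  split; [intros HA HB; split; [apply pure_Sum|apply pure_Prod]; assumption|].
  split; [apply npure_Sharp|apply npure_ArrL].
Qed.
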